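(* Let $\boldsymbol{h}_1,\dots,\boldsymbol{h}_K\in\mathbb{C}^{N_t\times1}$, $\Gamma\ge0$, $P>0$, and let $\lambda\ge0$, $\mu_1,\dots,\mu_K\ge0$ be such that $\boldsymbol{A}(\lambda,\{\mu_k\}):=\lambda\boldsymbol{I}-\sum_{k=1}^K\mu_k\boldsymbol{h}_k\boldsymbol{h}_k^H\succeq\boldsymbol{0}$. Let $N=\mathrm{rank}(\boldsymbol{A}(\lambda,\{\mu_k\}))\le N_t$ and let $\boldsymbol{A}(\lambda,\{\mu_k\})=\boldsymbol{U}\boldsymbol{\Lambda}\boldsymbol{U}^H$ be an eigenvalue decomposition with $\boldsymbol{U}$ unitary and $\boldsymbol{\Lambda}=\mathrm{diag}(\alpha_1,\dots,\alpha_{N_t})$, $\alpha_1\ge\dots\ge\alpha_{N_t}$ (so $\alpha_i>0$ for $i\le N$ and $\alpha_i=0$ for $i>N$). Consider the problem of minimizing over $\boldsymbol{S}_x\succeq\boldsymbol{0}$ the function $$\mathcal{L}(\boldsymbol{S}_x,\lambda,\{\mu_k\}) = \mathrm{tr}(\boldsymbol{S}_x^{-1}) + \Gamma\sum_{k=1}^K\mu_k + \mathrm{tr}\big(\boldsymbol{A}(\lambda,\{\mu_k\})\boldsymbol{S}_x\big) - \lambda P,$$ with $\mathrm{tr}(\boldsymbol{S}_x^{-1})=+\infty$ for singular $\boldsymbol{S}_x$. Then the optimal solution is $\boldsymbol{S}_x^{*}=\boldsymbol{U}\boldsymbol{\Sigma}\boldsymbol{U}^H$ with $\boldsymbol{\Sigma}=\mathrm{diag}(\tau_1,\dots,\tau_{N_t})$,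 where $\tau_i=\alpha_i^{-1/2}$ for $i\le N$ and $\tau_i\to+\infty$ for $N<i\le N_t$. Precisely: if $N=N_t$, then $\boldsymbol{U}\,\mathrm{diag}(\alpha_1^{-1/2},\dots,\alpha_{N_t}^{-1/2})\,\boldsymbol{U}^H$ minimizes $\mathcal{L}(\cdot,\lambda,\{\mu_k\})$ over $\boldsymbol{S}_x\succeq\boldsymbol{0}$; and in general, $\inf_{\boldsymbol{S}_x\succeq\boldsymbol{0}}\mathcal{L}(\boldsymbol{S}_x,\lambda,\{\mu_k\}) = \lim_{t\to+\infty}\mathcal{L}\big(\boldsymbol{U}\,\mathrm{diag}(\alpha_1^{-1/2},\dots,\alpha_N^{-1/2},t,\dots,t)\,\boldsymbol{U}^H,\lambda,\{\mu_k\}\big)$.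
   Context: $\boldsymbol{S}\succeq\boldsymbol{0}$ denotes Hermitian positive semidefinite; $(\cdot)^H$ is conjugate transpose; $\boldsymbol{I}$ is the $N_t\times N_t$ identity. *)

From HB Require Import structures.
From mathcomp Require Import all_boot all_order all_algebra.
From mathcomp Require Import all_classical all_reals all_analysis.
From mathcomp Require Import complex.
Set Implicit Arguments. Unset Strict Implicit. Unset Printing Implicit Defensive.
Import Order.TTheory GRing.Theory Num.Theory.
Local Open Scope ring_scope.

Definition ctmx (R : rcfType) (m n : nat) (A : 'M[R[i]]_(m, n)) : 'M[R[i]]_(n, m) :=
  (map_mx (@conjc R) A)^T.

Definition psd (R : rcfType) (n : nat) (A : 'M[R[i]]_n) : Prop :=
  ctmx A = A /\ forall v : 'cV[R[i]]_n, 0 <= (ctmx v *m A *m v) 0 0.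

Definition rdiag (R : rcfType) (n : nat) (d : 'I_n -> R) : 'M[R[i]]_n :=
  diag_mx (\row_j (d j)%:C%C).

Definition Amat (R : rcfType) (n K : nat) (h : 'I_K -> 'cV[R[i]]_n)
  (lam : R) (mu : 'I_K -> R) : 'M[R[i]]_n :=
  (lam%:C%C)%:M - \sum_(k < K) ((mu k)%:C%C *: (h k *m ctmx (h k))).

(* the (real-valued) Lagrangian for nonsingular S; tr(S^{-1}) and tr(A S) are real
   for Hermitian S, A, so we take real parts *)
Definition Lreal (R : rcfType) (n K : nat) (h : 'I_K -> 'cV[R[i]]_n)
  (Gam P lam : R) (mu : 'I_K -> R) (S : 'M[R[i]]_n) : R :=
  complex.Re (\tr (invmx S)) + Gam * \sum_(k < K) mu k
  + complex.Re (\tr (Amat h lam mu *m S)) - lam * P.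

Definition Lag (R : realType) (n K : nat) (h : 'I_K -> 'cV[R[i]]_n)
  (Gam P lam : R) (mu : 'I_K -> R) (S : 'M[R[i]]_n) : \bar R :=
  if S \in unitmx then (Lreal h Gam P lam mu S)%:E else +oo%E.

(* Let B := A^(1/2) = U diag(sqrt alpha) U^H.  For every invertible S >= 0,
     tr(S^-1) + tr(A S) - 2 tr B = tr((I - S B)^H S^-1 (I - S B)) >= 0,
   a matrix AM-GM inequality, so the Lagrangian is bounded below by
   2 tr B + Gam sum_k mu_k - lam P.  On S_t = U diag(tau) U^H, with
   tau_i = alpha_i^(-1/2) on the N positive eigenvalues and tau_i = t on the
   kernel of A, each positive eigenvalue contributes exactly 2 sqrt(alpha_i) and
   each zero one contributes 1/t: the Lagrangian is the bound plus (Nt - N)/t.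
   Hence the bound is attained when N = Nt and is the limit as t -> +oo. *)

From HB Require Import structures.
From mathcomp Require Import all_boot all_order all_algebra.
From mathcomp Require Import all_classical all_reals all_analysis.
From mathcomp Require Import complex.
From mathcomp Require Import ring lra.
Set Implicit Arguments. Unset Strict Implicit. Unset Printing Implicit Defensive.
Import Order.TTheory GRing.Theory Num.Theory numFieldNormedType.Exports.
Local Open Scope ring_scope.

Section ConjugateTranspose.
Variable R : rcfType.
Local Notation C := R[i].

Lemma ctmxM m n p (A : 'M[C]_(m, n)) (B : 'M[C]_(n, p)) :
  ctmx (A *m B) = ctmx B *m ctmx A.
Proof. by rewrite /ctmx map_mxM trmx_mul. Qed.

Lemma ctmxK m n (A : 'M[C]_(m, n)) : ctmx (ctmx A) = A.
Proof. by apply/matrixP => i j; rewrite !mxE conjcK. Qed.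

Lemma ctmxB m n (A B : 'M[C]_(m, n)) : ctmx (A - B) = ctmx A - ctmx B.
Proof. by apply/matrixP => i j; rewrite !mxE rmorphB. Qed.

Lemma ctmx1 n : ctmx (1%:M : 'M[C]_n) = 1%:M.
Proof. by rewrite /ctmx map_mx1 trmx1. Qed.

Lemma ctmx_invmx n (A : 'M[C]_n) : ctmx (invmx A) = invmx (ctmx A).
Proof. by rewrite /ctmx map_invmx trmx_inv. Qed.

Lemma ctmx_delta n (j : 'I_n) : ctmx (delta_mx j (0 : 'I_1) : 'cV[C]_n) = delta_mx 0 j.
Proof. by apply/matrixP => a b; rewrite !mxE conjc_nat andbC !ord1 eqxx eq_sym. Qed.

Lemma ctmx_rdiag n (d : 'I_n -> R) : ctmx (rdiag d) = rdiag d.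
Proof.
apply/matrixP => i j; rewrite !mxE.
by case: eqVneq => [->|_]; rewrite /= ?mulr1n ?mulr0n oppr0.
Qed.

Lemma rdiagM n (a b : 'I_n -> R) : rdiag a *m rdiag b = rdiag (fun i => a i * b i).
Proof.
rewrite /rdiag mulmx_diag; congr diag_mx; apply/rowP => j.
by rewrite !mxE rmorphM.
Qed.

Lemma rdiagV n (d : 'I_n -> R) : (forall i, d i != 0) ->
  rdiag d *m rdiag (fun i => (d i)^-1) = 1%:M.
Proof. by move=> d_neq0; rewrite rdiagM; apply/matrixP => i j; rewrite !mxE divff. Qed.

Lemma rdiag_unit n (d : 'I_n -> R) : (forall i, d i != 0) -> rdiag d \in unitmx.
Proof. by move/rdiagV/mulmx1_unit => []. Qed.

Lemma mxtrace_rdiag n (a : 'I_n -> R) : \tr (rdiag a) = (\sum_i a i)%:C%C.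
Proof. by rewrite /rdiag mxtrace_diag rmorph_sum; apply: eq_bigr => j _; rewrite mxE. Qed.

End ConjugateTranspose.

Section PositiveSemidefinite.
Variables (R : rcfType) (n : nat).
Local Notation C := R[i].

Lemma psd_mxtrace_conj (Q M : 'M[C]_n) : psd Q -> 0 <= \tr (ctmx M *m Q *m M).
Proof.
move=> [_ Q_ge0]; apply: sumr_ge0 => j _.
have -> : (ctmx M *m Q *m M) j j
    = (ctmx (M *m delta_mx j (0 : 'I_1)) *m Q *m (M *m delta_mx j (0 : 'I_1))) 0 0.
  by rewrite ctmxM ctmx_delta !mulmxA -colE -!mulmxA -rowE !mxE.
exact: Q_ge0.
Qed.

Lemma psd_invmx (S : 'M[C]_n) : psd S -> S \in unitmx -> psd (invmx S).
Proof.
move=> [S_herm S_ge0] S_unit; split; first by rewrite ctmx_invmx S_herm.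
move=> v; rewrite -[v](mulKVmx S_unit); set w := invmx S *m v.
by rewrite ctmxM S_herm -!mulmxA mulKVmx // mulmxA.
Qed.

Lemma mxtrace_complete_square (S B : 'M[C]_n) : psd S -> S \in unitmx -> ctmx B = B ->
  \tr (ctmx (1%:M - S *m B) *m invmx S *m (1%:M - S *m B))
  = \tr (invmx S) + \tr (B *m B *m S) - 2%:R * \tr B.
Proof.
move=> [S_herm _] S_unit B_herm.
rewrite ctmxB ctmx1 ctmxM S_herm B_herm.
rewrite mulmxBl mul1mx mulmxK // mulmxBl !mulmxBr !mulmx1 mulmxA mulVmx // mul1mx !mulmxA.
rewrite !raddfB /= [\tr (B *m S *m B)]mxtrace_mulC mulmxA; ring.
Qed.

Lemma Re_mxtrace_AMGM (S B : 'M[C]_n) : psd S -> S \in unitmx -> ctmx B = B ->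
  2 * complex.Re (\tr B) <= complex.Re (\tr (invmx S)) + complex.Re (\tr (B *m B *m S)).
Proof.
move=> S_psd S_unit B_herm.
have := psd_mxtrace_conj (1%:M - S *m B) (psd_invmx S_psd S_unit).
rewrite mxtrace_complete_square //.
case: (\tr (invmx S)) => a1 a2; case: (\tr (B *m B *m S)) => b1 b2; case: (\tr B) => c1 c2.
rewrite lecE /= => /andP[_]; lra.
Qed.

End PositiveSemidefinite.

Section UnitarySimilarity.
Variables (R : rcfType) (n : nat) (U : 'M[R[i]]_n).
Hypothesis unitaryU : ctmx U *m U = 1%:M.
Local Notation udiag d := (U *m rdiag d *m ctmx U).

Lemma udiagM (d e : 'I_n -> R) : udiag d *m udiag e = udiag (fun i => d i * e i).
Proof. by rewrite !mulmxA -(mulmxA _ (ctmx U)) unitaryU mulmx1 -(mulmxA U) rdiagM. Qed.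

Lemma mxtrace_udiag (d : 'I_n -> R) : \tr (udiag d) = (\sum_i d i)%:C%C.
Proof. by rewrite mxtrace_mulC mulmxA unitaryU mul1mx mxtrace_rdiag. Qed.

Lemma ctmx_udiag (d : 'I_n -> R) : ctmx (udiag d) = udiag d.
Proof. by rewrite !ctmxM ctmxK ctmx_rdiag mulmxA. Qed.

Lemma udiagV (d : 'I_n -> R) : (forall i, d i != 0) ->
  udiag d *m udiag (fun i => (d i)^-1) = 1%:M.
Proof.
by move=> d_neq0; rewrite udiagM -rdiagM rdiagV // mulmx1 (mulmx1C unitaryU).
Qed.

Lemma udiag_unit (d : 'I_n -> R) : (forall i, d i != 0) -> udiag d \in unitmx.
Proof. by move/udiagV/mulmx1_unit => []. Qed.

Lemma invmx_udiag (d : 'I_n -> R) : (forall i, d i != 0) ->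
  invmx (udiag d) = udiag (fun i => (d i)^-1).
Proof.
move=> d_neq0; have d_unit := udiag_unit d_neq0.
by rewrite -[RHS]mul1mx -(mulVmx d_unit) -[RHS]mulmxA udiagV // mulmx1.
Qed.

Lemma psd_udiag (d : 'I_n -> R) : (forall i, 0 <= d i) -> psd (udiag d).
Proof.
move=> d_ge0; split; first exact: ctmx_udiag.
move=> v; set w := ctmx U *m v.
have -> : ctmx v *m udiag d *m v = ctmx w *m rdiag d *m w.
  by rewrite /w ctmxM ctmxK !mulmxA.
rewrite /rdiag mul_mx_diag !mxE; apply: sumr_ge0 => k _; rewrite !mxE.
by rewrite mulrC mulrA mulr_ge0 ?mulcJ_ge0 // ler0c.
Qed.

Lemma psd_udiag_ge0 (d : 'I_n -> R) : psd (udiag d) -> forall i, 0 <= d i.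
Proof.
move=> [_ udiag_ge0] i; have := udiag_ge0 (U *m delta_mx i (0 : 'I_1)).
rewrite ctmxM ctmx_delta !mulmxA -(mulmxA _ (ctmx U)) unitaryU mulmx1.
rewrite -(mulmxA _ (ctmx U)) unitaryU mulmx1 -colE -rowE !mxE eqxx mulr1n.
by rewrite ler0c.
Qed.

Lemma mxrank_udiag (d : 'I_n -> R) : \rank (udiag d) = \rank (rdiag d).
Proof.
have [U_unit Uh_unit] := mulmx1_unit unitaryU.
rewrite mxrankMfree ?row_free_unit //.
by rewrite (eqmxMfull _ (_ : row_full U)) // row_full_unit.
Qed.

End UnitarySimilarity.

Section DiagonalRank.
Variables (R : rcfType) (n : nat).

Lemma mxrank_rdiag_prefix (d : 'I_n -> R) m : (m <= n)%N ->
  (forall i : 'I_n, (i < m)%N = (d i != 0)) -> \rank (rdiag d) = m.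
Proof.
move=> le_mn supp_d.
pose d' (i : 'I_n) := if (i < m)%N then d i else 1.
have d'_neq0 i : d' i != 0 by rewrite /d'; case: ifP => [|_]; rewrite ?supp_d ?oner_eq0.
have -> : rdiag d = pid_mx m *m rdiag d'.
  apply/matrixP => i j; rewrite /rdiag mul_mx_diag !mxE /d'.
  case: eqVneq => [<-|ij] /=; last by rewrite (negbTE (ij : (i : nat) != j)) mulr0n mul0r.
  rewrite eqxx /= mulr1n; case: ifP => [_|im]; first by rewrite mul1r.
  by have := supp_d i; rewrite im => /esym/negbFE/eqP ->; rewrite mul0r.
by rewrite mxrankMfree ?row_free_unit ?rdiag_unit // rank_pid_mx.
Qed.

Lemma mxrank_rdiag_nonincreasing (d : 'I_n -> R) :
  (forall i, 0 <= d i) -> (forall i j : 'I_n, (i <= j)%N -> d j <= d i) ->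
  forall i : 'I_n, (i < \rank (rdiag d))%N = (0 < d i).
Proof.
move=> d_ge0 d_noninc.
pose vanishes_from j := [forall i : 'I_n, (j <= i)%N ==> (d i == 0)].
have vanishes_n : vanishes_from n by apply/forallP => i; rewrite leqNgt ltn_ord.
case: (ex_minnP (ex_intro _ n vanishes_n)) => m /forallP vanishes_m min_m.
have supp_d (i : 'I_n) : (i < m)%N = (d i != 0).
  apply/idP/idP => [im|]; last first.
    by apply: contraR; rewrite -leqNgt => /(implyP (vanishes_m i)).
  apply/negP => /eqP di0; have : vanishes_from i.
    apply/forallP => j; apply/implyP => ij.
    by rewrite eq_le d_ge0 andbT -di0 d_noninc.
  by move/min_m; rewrite leqNgt im.
by move=> i; rewrite (mxrank_rdiag_prefix (min_m _ vanishes_n) supp_d) lt_def d_ge0 andbT.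
Qed.

End DiagonalRank.

Lemma sum_ord_tail_const (V : nmodType) (n N : nat) (x : V) :
  \sum_(i < n) (if (i < N)%N then 0 else x) = x *+ (n - N).
Proof.
rewrite -(big_mkord xpredT (fun i => if (i < N)%N then 0 else x)).
have [le_Nn|lt_nN] := leqP N n; last first.
  rewrite (eq_big_nat _ _ (F2 := fun=> 0)) ?big1 // => [|i /andP[_ lt_in]].
    by move/ltnW/eqP: lt_nN => ->.
  by rewrite (ltn_trans lt_in lt_nN).
rewrite (big_cat_nat (leq0n N) le_Nn) /= big_nat_cond big1 ?add0r; last first.
  by move=> i /andP[/andP[_ ->]].
rewrite (eq_big_nat _ _ (F2 := fun=> x)) ?sumr_const_nat // => i /andP[le_Ni _].
by rewrite ltnNge le_Ni.
Qed.

Section LagrangianLowerBound.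
Variables (R : rcfType) (n K : nat) (h : 'I_K -> 'cV[R[i]]_n).
Variables (Gam P lam : R) (mu : 'I_K -> R) (U : 'M[R[i]]_n) (alpha : 'I_n -> R).
Hypothesis unitaryU : ctmx U *m U = 1%:M.
Hypothesis A_udiag : Amat h lam mu = U *m rdiag alpha *m ctmx U.
Hypothesis alpha_ge0 : forall i, 0 <= alpha i.
Local Notation udiag d := (U *m rdiag d *m ctmx U).

Definition Lag_min := 2 * \sum_i Num.sqrt (alpha i) + Gam * \sum_(k < K) mu k - lam * P.

Lemma Lreal_udiag (tau : 'I_n -> R) : (forall i, tau i != 0) ->
  Lreal h Gam P lam mu (udiag tau)
  = \sum_i (tau i)^-1 + Gam * \sum_(k < K) mu k + \sum_i alpha i * tau i - lam * P.
Proof.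
by move=> tau_neq0; rewrite /Lreal invmx_udiag // A_udiag udiagM // !mxtrace_udiag.
Qed.

Lemma Lreal_ge_min (S : 'M[R[i]]_n) : psd S -> S \in unitmx ->
  Lag_min <= Lreal h Gam P lam mu S.
Proof.
move=> S_psd S_unit; pose B := udiag (fun i => Num.sqrt (alpha i)).
have BB : B *m B = Amat h lam mu.
  rewrite udiagM // A_udiag; congr (_ *m rdiag _ *m _); apply: funext => i.
  by rewrite -expr2 sqr_sqrtr.
have := Re_mxtrace_AMGM S_psd S_unit (ctmx_udiag U _ : ctmx B = B).
rewrite BB mxtrace_udiag //= /Lreal /Lag_min; lra.
Qed.

End LagrangianLowerBound.

Local Open Scope classical_set_scope.

Lemma invr_cvg0_pinfty (R : realFieldType) : (t : R)^-1 @[t --> +oo] --> 0.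
Proof.
apply/(@gtr0_cvgV0 _ _ _ _ id); last exact: cvg_id.
by apply: nbhs_pinfty_gt; rewrite num_real.
Qed.

Section LagrangianInfimum.
Variables (R : realType) (n K : nat) (h : 'I_K -> 'cV[R[i]]_n).
Variables (Gam P lam : R) (mu : 'I_K -> R) (U : 'M[R[i]]_n) (alpha : 'I_n -> R).
Hypothesis unitaryU : ctmx U *m U = 1%:M.
Hypothesis A_udiag : Amat h lam mu = U *m rdiag alpha *m ctmx U.
Hypothesis alpha_ge0 : forall i, 0 <= alpha i.
Hypothesis alpha_noninc : forall i j : 'I_n, (i <= j)%N -> alpha j <= alpha i.
Local Notation udiag d := (U *m rdiag d *m ctmx U).
Local Notation Lag := (Lag h Gam P lam mu).
Local Notation N := (\rank (Amat h lam mu)).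
Local Notation tau t := (fun i : 'I_n => if (i < N)%N then (Num.sqrt (alpha i))^-1 else t).
Local Notation Lag_min := (Lag_min Gam P lam mu alpha).

Lemma ltn_rank_Amat (i : 'I_n) : (i < N)%N = (0 < alpha i).
Proof.
by rewrite A_udiag (mxrank_udiag unitaryU) mxrank_rdiag_nonincreasing.
Qed.

Lemma psd_udiag_tau t : 0 <= t -> psd (udiag (tau t)).
Proof.
move=> t_ge0; apply: psd_udiag => // i.
by case: ifP => // _; rewrite invr_ge0 sqrtr_ge0.
Qed.

Lemma Lag_udiag_tau t : 0 < t -> Lag (udiag (tau t)) = (Lag_min + (n - N)%:R / t)%:E.
Proof.
move=> t_gt0; have tau_neq0 i : tau t i != 0.
  rewrite /=; case: ifP => [iN|_]; last by rewrite gt_eqF.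
  by rewrite invr_eq0 gt_eqF // sqrtr_gt0 -ltn_rank_Amat.
have term i : (tau t i)^-1 + alpha i * tau t i
    = 2 * Num.sqrt (alpha i) + (if (i < N)%N then 0 else t^-1).
  rewrite /=; case: ifP => [|iN]; last first.
    have -> : alpha i = 0.
      by apply/eqP; rewrite eq_le alpha_ge0 andbT leNgt -ltn_rank_Amat iN.
    by rewrite sqrtr0; lra.
  rewrite ltn_rank_Amat -sqrtr_gt0 => sqrt_gt0.
  rewrite -{2}[alpha i]sqr_sqrtr // invrK expr2 mulrK ?unitfE ?gt_eqF //; lra.
have sum_terms : \sum_i (tau t i)^-1 + \sum_i alpha i * tau t i
    = 2 * \sum_i Num.sqrt (alpha i) + (n - N)%:R / t.
  rewrite -big_split /= (eq_bigr _ (fun i _ => term i)) big_split /= -mulr_sumr.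
  by rewrite sum_ord_tail_const -(mulr_natl t^-1).
rewrite /Lag udiag_unit // (Lreal_udiag Gam P unitaryU A_udiag) // /Lag_min.
congr EFin; lra.
Qed.

Lemma Lag_ge_min (S : 'M[R[i]]_n) : psd S -> (Lag_min%:E <= Lag S)%E.
Proof.
move=> S_psd; rewrite /Lag; case: ifP => [S_unit|_]; last exact: leey.
by rewrite lee_fin (Lreal_ge_min Gam P unitaryU A_udiag).
Qed.

Lemma ereal_inf_Lag : ereal_inf [set Lag S | S in @psd R n] = Lag_min%:E.
Proof.
apply/eqP; rewrite eq_le; apply/andP; split; last first.
  by apply: le_ereal_inf_tmp => _ [S S_psd <-]; exact: Lag_ge_min.
apply/lee_addgt0Pr => e e_gt0.
pose k : R := (n - N)%:R.
have t_gt0 : 0 < (k + 1) / e by rewrite divr_gt0 // ltr_wpDl ?ler0n.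
apply: ge_ereal_inf; exists (Lag (udiag (tau ((k + 1) / e)))).
  by exists (udiag (tau ((k + 1) / e))) => //; apply: psd_udiag_tau; rewrite ltW.
rewrite Lag_udiag_tau // -EFinD lee_fin lerD2l -/k invf_div mulrA.
by rewrite ler_pdivrMr ?ltr_wpDl ?ler0n // mulrDr mulr1 mulrC lerDl ltW.
Qed.

Lemma Lag_udiag_tau_cvg : Lag (udiag (tau t)) @[t --> +oo] --> Lag_min%:E.
Proof.
have lim_real : Lag_min + (n - N)%:R / t @[t --> +oo] --> Lag_min.
  suff : Lag_min + (n - N)%:R / t @[t --> +oo] --> Lag_min + (n - N)%:R * 0.
    by rewrite mulr0 addr0.
  apply: cvgD; first exact: cvg_cst.
  apply: cvgMl_tmp; exact: invr_cvg0_pinfty.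
have lim_ext : (Lag_min + (n - N)%:R / t)%:E @[t --> +oo] --> Lag_min%:E.
  by apply: cvg_EFin; [exact: nearW | exact: lim_real].
apply: (cvg_trans _ lim_ext); apply: near_eq_cvg; near=> t.
have t_gt0 : 0 < t by near: t; apply: nbhs_pinfty_gt; rewrite num_real.
by rewrite Lag_udiag_tau.
Unshelve. all: by end_near.
Qed.

End LagrangianInfimum.

Unset Implicit Arguments.
Set Strict Implicit.

Theorem lemma3 (R : realType) (Nt K : nat) (h : 'I_K -> 'cV[R[i]]_Nt)
  (Gam P lam : R) (mu : 'I_K -> R)
  (U : 'M[R[i]]_Nt) (alpha : 'I_Nt -> R) :
  0 <= Gam -> 0 < P -> 0 <= lam -> (forall k, 0 <= mu k) ->
  psd (Amat h lam mu) ->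
  U *m ctmx U = 1%:M -> ctmx U *m U = 1%:M ->
  Amat h lam mu = U *m rdiag alpha *m ctmx U ->
  (forall i j : 'I_Nt, (i <= j)%N -> alpha j <= alpha i) ->
  let N := \rank (Amat h lam mu) in
  let Sopt := U *m rdiag (fun i => (Num.sqrt (alpha i))^-1) *m ctmx U in
  let St := fun t : R =>
    U *m rdiag (fun i => if (i < N)%N then (Num.sqrt (alpha i))^-1 else t) *m ctmx U in
  (N = Nt ->
     psd Sopt /\
     forall S : 'M[R[i]]_Nt, psd S ->
       (Lag h Gam P lam mu Sopt <= Lag h Gam P lam mu S)%E)
  /\
  Lag h Gam P lam mu (St t) @[t --> +oo] -->
    ereal_inf [set Lag h Gam P lam mu S | S in @psd R Nt].
Proof.
move=> _ _ _ _ A_psd _ unitaryU A_udiag alpha_noninc N Sopt St.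
have alpha_ge0 : forall i, 0 <= alpha i.
  by apply: (psd_udiag_ge0 unitaryU); rewrite -A_udiag.
split; last first.
  rewrite /St /N (ereal_inf_Lag Gam P unitaryU A_udiag alpha_ge0 alpha_noninc).
  exact: Lag_udiag_tau_cvg.
move=> N_full; have Sopt_St1 : Sopt = St 1.
  by congr (_ *m rdiag _ *m _); apply: funext => i; rewrite N_full ltn_ord.
rewrite Sopt_St1; split; first exact: psd_udiag_tau.
move=> S S_psd; rewrite (Lag_udiag_tau Gam P unitaryU A_udiag alpha_ge0 alpha_noninc) //.
by rewrite -/N N_full subnn mul0r addr0 (Lag_ge_min Gam P unitaryU A_udiag alpha_ge0).
Qed.
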